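(* Let $\sigma\in\mathbb{C}$ with $\operatorname{Re}\sigma>0$, let $\sqrt\sigma$ be the principal square root, ${\bf L}={\bf I}+(\sigma-1){\bf A}$, $c=\sqrt\sigma$, and $u=(\sqrt\sigma-1)/(\sqrt\sigma+1)$. Then ${\bf L}+c{\bf I}$ is invertible, $|u|<1$, and ${\bf K}=({\bf L}-c{\bf I})({\bf L}+c{\bf I})^{-1}$ satisfies $\|{\bf K}\|\le|u|$. Consequently, with $\Upsilon={\bf I}-2\Gamma$, $\|\Upsilon{\bf K}\|\le|u|$ and $$[-c{\bf I}+\Gamma({\bf L}+c{\bf I})]^{-1}=-2({\bf L}+c{\bf I})^{-1}\sum_{n=0}^\infty(\Upsilon{\bf K})^n\,\Upsilon,$$ the series converging in operator norm with rate of convergence at most $|u|$.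
   Context: ${\cal H}$ is a complex Hilbert space, $\Gamma$ is an orthogonal projection on ${\cal H}$, and ${\bf A}:{\cal H}\to{\cal H}$ is bounded Hermitian with $0\le{\bf A}\le{\bf I}$. For a series $\sum_n\alpha^n{\bf C}_n$ the rate of convergence is $|\alpha|\limsup_n\|{\bf C}_n\|^{1/n}$. *)

From HB Require Import structures.
From mathcomp Require Import all_boot all_order all_algebra.
From mathcomp Require Import all_classical all_reals all_analysis.
From mathcomp Require Export complex.
Set Implicit Arguments. Unset Strict Implicit. Unset Printing Implicit Defensive.
Import Order.TTheory GRing.Theory Num.Theory.
Import numFieldNormedType.Exports.
Local Open Scope classical_set_scope.
Local Open Scope ring_scope.

Section Hilbert.
Variable R : realType.
Local Notation C := (R[i]).
Variable H : lmodType C.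
Variable ip : H -> H -> C.   (* inner product, linear in the first argument *)

Definition hnorm (x : H) : R := Num.sqrt (complex.Re (ip x x)).

Record is_hilbert : Prop := {
  ip_linl : forall (a : C) (x y z : H), ip (a *: x + y) z = a * ip x z + ip y z;
  ip_conj : forall x y : H, ip y x = conjc (ip x y);
  ip_pos  : forall x : H, 0 <= ip x x;
  ip_def  : forall x : H, ip x x = 0 -> x = 0;
  ip_complete : forall u : nat -> H,
    (forall e : R, 0 < e -> exists N : nat, forall m n : nat,
        (N <= m)%N -> (N <= n)%N -> hnorm (u m - u n) < e) ->
    exists l : H, (fun n => hnorm (u n - l)) @ \oo --> (0 : R) }.

Definition linear_op (T : H -> H) : Prop :=
  forall (a : C) (x y : H), T (a *: x + y) = a *: T x + T y.

Definition bounded_op (T : H -> H) : Prop :=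
  linear_op T /\ exists M : R, forall x : H, hnorm (T x) <= M * hnorm x.

Definition opnorm (T : H -> H) : R :=
  sup [set hnorm (T x) | x in [set x : H | hnorm x <= 1]].

Definition selfadj (T : H -> H) : Prop :=
  forall x y : H, ip (T x) y = ip x (T y).

Definition orth_projection (P : H -> H) : Prop :=
  bounded_op P /\ (forall x, P (P x) = P x) /\ selfadj P.

Definition is_inverse (f g : H -> H) : Prop :=
  (forall x, f (g x) = x) /\ (forall x, g (f x) = x).

Definition oppow (T : H -> H) (n : nat) : H -> H := fun x => iter n T x.

Definition neumann_partial (T : H -> H) (N : nat) : H -> H :=
  fun x => \sum_(n < N) oppow T n x.

Definition op_cvg (S : nat -> H -> H) (T : H -> H) : Prop :=
  (fun N => opnorm (fun x => S N x - T x)) @ \oo --> (0 : R).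

(* limsup_n ||C_n||^{1/n}; the rate of convergence of sum_n alpha^n C_n is
   |alpha| times this quantity *)
Definition root_limsup (Cn : nat -> H -> H) : \bar R :=
  limn_esup (fun n => ((opnorm (Cn n)) `^ (n%:R^-1))%:E).

End Hilbert.

(* With c = sqrt sigma we have Re c > 0 and L -+ c I = (1 -+ c) I + (c^2 - 1) A.
   For 0 <= A <= I and complex p, q,
     |p y + q A y|^2 = |p|^2 (|y|^2 - <Ay,y>) + |p+q|^2 <Ay,y> - |q|^2 (<Ay,y> - |Ay|^2),
   where the three brackets are nonnegative.  Since 1 - c = -u (1 + c) and
   c^2 - c = u (c^2 + c) with |u| < 1, comparing the two expansions gives
   |(L - c I) y| <= |u| |(L + c I) y|, i.e. |K| <= |u|.  The same identity makes
   I - b (L + c I) a strict contraction for small b > 0, so L + c I is invertible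
   through a Neumann series.  The reflection I - 2 Gamma is an isometric involution,
   hence |Ups K| <= |u|, the Neumann series of Ups K converges geometrically to
   (I - Ups K)^-1, and -c I + Gamma (L + c I) = -1/2 Ups (I - Ups K) (L + c I)
   inverts to the stated formula. *)

From HB Require Import structures.
From mathcomp Require Import all_boot all_order all_algebra.
From mathcomp Require Import all_classical all_reals all_analysis.
From mathcomp Require Import complex.
From mathcomp Require Import ring lra.
Import Order.TTheory GRing.Theory Num.Theory.
Import numFieldNormedType.Exports.
Local Open Scope classical_set_scope.
Local Open Scope ring_scope.
Local Open Scope complex_scope.

Set Implicit Arguments.
Unset Strict Implicit.
Unset Printing Implicit Defensive.

Local Notation Re := (@complex.Re _).
Local Notation Im := (@complex.Im _).
Local Notation normc := Normc.normc.

Section ComplexModulus.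
Variable R : realType.
Implicit Types (z w : R[i]) (b : R).

Definition sqnormc z : R := Re z ^+ 2 + Im z ^+ 2.

Lemma sqnormc0 : sqnormc 0 = 0.
Proof. by rewrite /sqnormc /= expr0n addr0. Qed.

Lemma sqnormc1 : sqnormc 1 = 1.
Proof. by rewrite /sqnormc /= expr0n expr1n addr0. Qed.

Lemma sqnormc_ge0 z : 0 <= sqnormc z.
Proof. by rewrite addr_ge0 ?sqr_ge0. Qed.

Lemma sqnormc_gt0 z : 0 < Re z -> 0 < sqnormc z.
Proof. by case: z => a b /= ha; rewrite /sqnormc /=; have := sqr_ge0 b; nra. Qed.

Lemma sqnormcM z w : sqnormc (z * w) = sqnormc z * sqnormc w.
Proof. by case: z => a b; case: w => c d; rewrite /sqnormc /=; simpc => /=; ring. Qed.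

Lemma sqnormcN z : sqnormc (- z) = sqnormc z.
Proof. by case: z => a b; rewrite /sqnormc /= !sqrrN. Qed.

Lemma normc_sqnormc z : normc z = Num.sqrt (sqnormc z).
Proof. by case: z. Qed.

Lemma sqrnormc z : normc z ^+ 2 = sqnormc z.
Proof. by rewrite normc_sqnormc sqr_sqrtr // sqnormc_ge0. Qed.

Lemma normc_ge0 z : 0 <= normc z.
Proof. by rewrite normc_sqnormc sqrtr_ge0. Qed.

Lemma Re_sqrtc_gt0 z : 0 < Re z -> 0 < Re (sqrtc z).
Proof.
case: z => a b /= ha; rewrite sqrtr_gt0 divr_gt0 //.
have := sqrtr_ge0 (a ^+ 2 + b ^+ 2); lra.
Qed.

Lemma sqnormc_1_subZ_lt1 b z :
  0 < Re z -> 0 < b -> b * sqnormc z <= Re z -> sqnormc (1 - b%:C * z) < 1.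
Proof.
case: z => x y /= hx hb hbz.
have -> : sqnormc (1 - b%:C * (x +i* y)) = 1 - b * (2 * x - b * sqnormc (x +i* y)).
  by rewrite /sqnormc /=; simpc => /=; ring.
suff : 0 < b * (2 * x - b * sqnormc (x +i* y)) by lra.
by rewrite mulr_gt0 //; lra.
Qed.

Lemma cayley_normc_lt1 z : 0 < Re z -> normc ((z - 1) / (z + 1)) < 1.
Proof.
move=> hz; rewrite Normc.normcM Normc.normcV.
have hp : 0 < sqnormc (z + 1) by rewrite sqnormc_gt0 // raddfD /= addr_gt0.
rewrite ltr_pdivrMr ?normc_sqnormc ?sqrtr_gt0 // mul1r ltr_sqrt //.
by case: z hz {hp} => a b /= ha; rewrite /sqnormc /=; simpc => /=; nra.
Qed.

End ComplexModulus.

Lemma quadratic_ge0_discr (R : realFieldType) (a b c : R) : 0 <= c ->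
  (forall t, 0 <= a - 2 * b * t + c * t ^+ 2) -> b ^+ 2 <= a * c.
Proof.
move=> c_ge0 hq; have [c0|c_neq0] := eqVneq c 0.
  have [b0|b_neq0] := eqVneq b 0; first by rewrite b0 c0 expr0n mulr0.
  have e : 2 * b * ((a + 1) / (2 * b)) = a + 1 by field; rewrite b_neq0.
  by have := hq ((a + 1) / (2 * b)); rewrite e c0 mul0r; lra.
have e : c * (b / c) = b by field.
have := hq (b / c); move: (b / c) e => t e h.
have := mulr_ge0 c_ge0 h; rewrite -e; nra.
Qed.

Record pos_hermitian_form (R : realType) (H : lmodType R[i]) (f : H -> H -> R[i])
  : Prop := {
  hform_linl : forall a x y z, f (a *: x + y) z = a * f x z + f y z;
  hform_conj : forall x y, f y x = conjc (f x y);
  hform_pos : forall x, 0 <= f x x }.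

Lemma hilbert_form (R : realType) (H : lmodType R[i]) (ip : H -> H -> R[i]) :
  is_hilbert ip -> pos_hermitian_form ip.
Proof. by case. Qed.

Section HermitianForm.
Variables (R : realType) (H : lmodType R[i]) (f : H -> H -> R[i]).
Hypothesis hf : pos_hermitian_form f.
Let f_linl := hform_linl hf.
Let f_conj := hform_conj hf.
Let f_pos := hform_pos hf.

Lemma hformDl x y z : f (x + y) z = f x z + f y z.
Proof. by rewrite -{1}[x]scale1r f_linl mul1r. Qed.

Lemma hform0l z : f 0 z = 0.
Proof. by apply: (addrI (f 0 z)); rewrite -hformDl !addr0. Qed.

Lemma hformZl a x z : f (a *: x) z = a * f x z.
Proof. by rewrite -[a *: x]addr0 f_linl hform0l addr0. Qed.

Lemma hformDr x y z : f x (y + z) = f x y + f x z.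
Proof. by rewrite f_conj hformDl rmorphD /= -!f_conj. Qed.

Lemma hformZr a x z : f x (a *: z) = conjc a * f x z.
Proof. by rewrite f_conj hformZl rmorphM /= -!f_conj. Qed.

Lemma hform_selfE x : f x x = (Re (f x x))%:C.
Proof. by have := f_pos x; case: (f x x) => a b; rewrite lecE /= => /andP[/eqP -> _]. Qed.

Lemma Re_hform_ge0 x : 0 <= Re (f x x).
Proof. by have := f_pos x; rewrite hform_selfE lecR. Qed.

Lemma Re_hformD x y :
  Re (f (x + y) (x + y)) = Re (f x x) + Re (f y y) + 2 * Re (f x y).
Proof.
rewrite hformDl !hformDr !raddfD /= [f y x]f_conj.
by case: (f x y) => a b /=; ring.
Qed.

Lemma Re_hformZ a x : Re (f (a *: x) (a *: x)) = sqnormc a * Re (f x x).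
Proof.
rewrite hformZl hformZr hform_selfE /sqnormc.
by case: a => a b /=; simpc => /=; ring.
Qed.

Lemma hform_cauchy_schwarz x y : sqnormc (f x y) <= Re (f x x) * Re (f y y).
Proof.
set w := f x y; have w_ge0 := sqnormc_ge0 w.
have quad t : 0 <= Re (f x x) - 2 * sqnormc w * t + sqnormc w * Re (f y y) * t ^+ 2.
  have := Re_hform_ge0 (x + (- (t%:C * w)) *: y).
  rewrite Re_hformD Re_hformZ hformZr sqnormcN sqnormcM -/w /sqnormc.
  by case: w {w_ge0} => a b /=; simpc => /=; nra.
have := quadratic_ge0_discr (mulr_ge0 w_ge0 (Re_hform_ge0 y)) quad.
have [->|w_neq0] := eqVneq (sqnormc w) 0; first by rewrite mulr_ge0 ?Re_hform_ge0.
rewrite mulrA [_ * sqnormc w]mulrC -mulrA expr2 ler_pM2l //.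
by rewrite lt_def w_neq0.
Qed.

End HermitianForm.

Section LinearOp.
Variables (R : realType) (H : lmodType R[i]) (f g : H -> H).
Hypothesis f_lin : linear_op f.

Lemma linear_op0 : f 0 = 0.
Proof.
have := f_lin 1 0 0; rewrite !scale1r addr0 => f00.
by apply: (addrI (f 0)); rewrite -f00 addr0.
Qed.

Lemma linear_opD x y : f (x + y) = f x + f y.
Proof. by rewrite -{1}[x]scale1r f_lin scale1r. Qed.

Lemma linear_opZ a x : f (a *: x) = a *: f x.
Proof. by rewrite -[a *: x]addr0 f_lin linear_op0 addr0. Qed.

Lemma linear_opN x : f (- x) = - f x.
Proof. by rewrite -scaleN1r linear_opZ scaleN1r. Qed.

Lemma linear_opB x y : f (x - y) = f x - f y.
Proof. by rewrite linear_opD linear_opN. Qed.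

Lemma linear_op_comp : linear_op g -> linear_op (fun x => g (f x)).
Proof. by move=> g_lin a x y; rewrite f_lin g_lin. Qed.

Lemma linear_op_comb p q : linear_op (fun x => p *: x + q *: f x).
Proof. by move=> a x y; rewrite f_lin !scalerDr !scalerA addrACA (mulrC p) (mulrC q). Qed.

Lemma linear_op_inverse : linear_op g -> is_inverse f g -> linear_op f.
Proof.
move=> g_lin [fg gf] a x y.
by rewrite -{1}(gf x) -{1}(gf y) -g_lin fg.
Qed.

End LinearOp.

Section HilbertNorm.
Variables (R : realType) (H : lmodType R[i]) (ip : H -> H -> R[i]).
Hypothesis hH : is_hilbert ip.
Local Notation hn := (hnorm ip).
Let hip := hilbert_form hH.

Lemma hnorm_ge0 x : 0 <= hn x.
Proof. exact: sqrtr_ge0. Qed.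

Lemma sqr_hnorm x : hn x ^+ 2 = Re (ip x x).
Proof. by rewrite sqr_sqrtr // (Re_hform_ge0 hip). Qed.

Lemma hnorm_eq0 x : hn x = 0 -> x = 0.
Proof.
move=> x0; apply: (ip_def hH).
by rewrite (hform_selfE hip) -sqr_hnorm x0 expr0n.
Qed.

Lemma hnormZ a x : hn (a *: x) = normc a * hn x.
Proof.
by rewrite /hnorm (Re_hformZ hip) normc_sqnormc sqrtrM ?sqnormc_ge0.
Qed.

Lemma hnorm_opp x : hn (- x) = hn x.
Proof. by rewrite -scaleN1r hnormZ normcN Normc.normc1 mul1r. Qed.

Lemma hnorm_subC x y : hn (x - y) = hn (y - x).
Proof. by rewrite -hnorm_opp opprB. Qed.

Lemma hnorm0 : hn 0 = 0.
Proof. by rewrite -(scale0r 0) hnormZ Normc.normc0 mul0r. Qed.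

Lemma Re_ip_le x y : Re (ip x y) <= hn x * hn y.
Proof.
have /= := hform_cauchy_schwarz hip x y.
rewrite -!sqr_hnorm /sqnormc -exprMn.
have := mulr_ge0 (hnorm_ge0 x) (hnorm_ge0 y).
move: (hn x * hn y) (ip x y) => n [a b] /=; nra.
Qed.

Lemma ler_hnormD x y : hn (x + y) <= hn x + hn y.
Proof.
rewrite -ler_sqr ?nnegrE ?addr_ge0 ?hnorm_ge0 //.
rewrite sqr_hnorm (Re_hformD hip) sqrrD -!sqr_hnorm.
by have := Re_ip_le x y; lra.
Qed.

Lemma ler_hnormB x y : hn (x - y) <= hn x + hn y.
Proof. by rewrite -(hnorm_opp y) ler_hnormD. Qed.

Lemma ler_hnorm_distD x y z : hn (x - z) <= hn (x - y) + hn (y - z).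
Proof. by have := ler_hnormD (x - y) (y - z); rewrite addrA subrK. Qed.

Lemma eq0_hnorm_le_all z : (forall e : R, 0 < e -> hn z <= e) -> z = 0.
Proof.
move=> small; apply: hnorm_eq0; apply/eqP; rewrite eq_le hnorm_ge0 andbT.
by apply/ler_addgt0Pr => e /small; rewrite add0r.
Qed.

Lemma opnorm_le (f : H -> H) (k : R) :
  0 <= k -> (forall x, hn (f x) <= k * hn x) -> opnorm ip f <= k.
Proof.
move=> k_ge0 fk; apply: ge_sup; first by exists (hn (f 0)), 0 => //=; rewrite hnorm0.
move=> _ [x /= x_le1 <-]; apply: le_trans (fk x) _.
by rewrite -[leRHS]mulr1 ler_wpM2l.
Qed.

Lemma opnorm_ge0 (f : H -> H) (k : R) :
  (forall x, hn (f x) <= k * hn x) -> 0 <= opnorm ip f.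
Proof.
move=> fk; apply: le_trans (hnorm_ge0 (f 0)) _.
apply: ub_le_sup; last by exists 0 => //=; rewrite hnorm0.
exists `|k| => _ [x /= x_le1 <-]; apply: le_trans (fk x) _.
have := hnorm_ge0 x; have := ler_norm k; have := normr_ge0 k; nra.
Qed.

End HilbertNorm.

Lemma ler_of_cvg0 (R : realType) (a b : R) (e : nat -> R) :
  e @ \oo --> 0 -> (\forall n \near \oo, a <= b + e n) -> a <= b.
Proof.
move=> e0 ab; apply/ler_addgt0Pr => eps eps_gt0.
near \oo => n; apply: le_trans (_ : b + e n <= b + eps).
  by near: n.
by rewrite lerD2l; near: n; exact: cvgr_le e0 _ eps_gt0.
Unshelve. all: by end_near.
Qed.

Lemma cvg_expr_scaled (R : realType) (r k : R) : 0 <= r -> r < 1 ->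
  (fun n => r ^+ n * k) @ \oo --> 0.
Proof.
move=> r_ge0 r_lt1; rewrite -(mul0r k); apply: cvgMl.
by apply: cvg_expr; rewrite ger0_norm.
Qed.

Section NeumannSeries.
Variables (R : realType) (H : lmodType R[i]) (ip : H -> H -> R[i]).
Hypothesis hH : is_hilbert ip.
Local Notation hn := (hnorm ip).
Variables (B : H -> H) (r : R).
Hypothesis B_lin : linear_op B.
Hypothesis r_ge0 : 0 <= r.
Hypothesis r_lt1 : r < 1.
Hypothesis B_le : forall x, hn (B x) <= r * hn x.
Local Notation s := (neumann_partial B).

Let q := (1 - r)^-1.
Let q_ge0 : 0 <= q. Proof. by rewrite invr_ge0 subr_ge0 ltW. Qed.
Let qE : (1 - r) * q = 1. Proof. by rewrite mulfV // subr_eq0 gt_eqF. Qed.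

Lemma oppow_linear n : linear_op (oppow B n).
Proof. by elim: n => [|n IHn] a x y //; rewrite /oppow !iterS -!/(oppow B n _) IHn. Qed.

Lemma hnorm_oppow_le n x : hn (oppow B n x) <= r ^+ n * hn x.
Proof.
elim: n => [|n IHn]; first by rewrite mul1r.
rewrite /oppow iterS -/(oppow B n x) exprS -mulrA; apply: le_trans (B_le _) _.
by rewrite ler_wpM2l.
Qed.

Lemma neumann_partialS N x : s N.+1 x = s N x + oppow B N x.
Proof. by rewrite /neumann_partial big_ord_recr. Qed.

Lemma neumann_partial0 x : s 0 x = 0.
Proof. by rewrite /neumann_partial big_ord0. Qed.

Lemma neumann_partial_linear N : linear_op (s N).
Proof.
move=> a x y; rewrite /neumann_partial scaler_sumr -big_split /=.
by apply: eq_bigr => i _; rewrite oppow_linear.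
Qed.

Lemma neumann_partial_telescope N x : s N x - B (s N x) = x - oppow B N x.
Proof.
elim: N => [|N IHN]; first by rewrite neumann_partial0 linear_op0 // !subrr.
rewrite neumann_partialS linear_opD // opprD addrACA IHN.
by rewrite /oppow iterS addrA subrK.
Qed.

Lemma neumann_partial_cauchy m n x :
  (m <= n)%N -> hn (s n x - s m x) <= r ^+ m * q * hn x.
Proof.
move=> /subnKC <-; set k := (n - m)%N.
suff tail : hn (s (m + k) x - s m x) <= (r ^+ m - r ^+ (m + k)) * q * hn x.
  apply: le_trans tail _; rewrite ler_wpM2r ?hnorm_ge0 ?ler_wpM2r //.
  by rewrite gerBl exprn_ge0.
elim: k => [|k IHk]; first by rewrite addn0 !subrr hnorm0 // !mul0r.
rewrite addnS neumann_partialS [_ + _ - _]addrAC.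
apply: le_trans (ler_hnormD hH _ _) _; apply: le_trans (lerD IHk (hnorm_oppow_le _ _)) _.
rewrite exprS; move: (r ^+ m) (r ^+ (m + k)) => a b.
have -> : (a - r * b) * q * hn x = (a - b) * q * hn x + b * hn x * ((1 - r) * q).
  by ring.
by rewrite qE mulr1.
Qed.

Lemma neumann_partial_cvg_at x : exists l, (fun n => hn (s n x - l)) @ \oo --> 0.
Proof.
apply: (ip_complete hH) => e e_gt0.
have [N _ small] := cvgr_lt _ (cvg_expr_scaled (2 * (q * hn x)) r_ge0 r_lt1) _ e_gt0.
exists N => m n Nm Nn; apply: le_lt_trans (ler_hnorm_distD hH _ (s N x) _) _.
rewrite [hn (s N x - _)]hnorm_subC //; apply: le_lt_trans (small N (leqnn N)).
have := neumann_partial_cauchy x Nm; have := neumann_partial_cauchy x Nn.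
by rewrite -!mulrA; lra.
Qed.

Definition neumann_sum x : H := projT1 (cid (neumann_partial_cvg_at x)).

Local Notation S := neumann_sum.

Lemma hnorm_neumann_partial_sub_sum N x : hn (s N x - S x) <= r ^+ N * q * hn x.
Proof.
have S_lim : (fun n => hn (s n x - S x)) @ \oo --> 0 := projT2 (cid (neumann_partial_cvg_at x)).
apply: (ler_of_cvg0 S_lim); near=> n.
apply: le_trans (ler_hnorm_distD hH _ (s n x) _) _.
rewrite lerD2r hnorm_subC //; apply: neumann_partial_cauchy.
by near: n; exact: nbhs_infty_ge.
Unshelve. all: by end_near.
Qed.

Lemma eq0_hnorm_le_expr z k : (forall N, hn z <= r ^+ N * k) -> z = 0.
Proof.
move=> z_le; apply: (eq0_hnorm_le_all hH) => e e_gt0.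
have [N _ small] := cvgr_lt _ (cvg_expr_scaled k r_ge0 r_lt1) _ e_gt0.
exact: le_trans (z_le N) (ltW (small N (leqnn N))).
Qed.

Lemma neumann_sum_linear : linear_op S.
Proof.
move=> a x y; apply/eqP; rewrite -subr_eq0; apply/eqP.
apply: (@eq0_hnorm_le_expr _ (q * (hn (a *: x + y) + normc a * hn x + hn y))) => N.
apply: le_trans (ler_hnorm_distD hH _ (s N (a *: x + y)) _) _.
rewrite [hn (S _ - _)]hnorm_subC // [X in _ + hn (X - _)]neumann_partial_linear.
rewrite opprD addrACA -scalerBr.
apply: le_trans (lerD (lexx _) (ler_hnormD hH _ _)) _; rewrite hnormZ //.
have := hnorm_neumann_partial_sub_sum N (a *: x + y).
have := hnorm_neumann_partial_sub_sum N x; have := hnorm_neumann_partial_sub_sum N y.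
have := normc_ge0 a; move: (normc a) => na; rewrite -!mulrA; nra.
Qed.

Lemma neumann_sum_le x : hn (S x) <= q * hn x.
Proof.
have := hnorm_neumann_partial_sub_sum 0 x.
by rewrite neumann_partial0 sub0r hnorm_opp // mul1r.
Qed.

Lemma neumann_sum_bounded : bounded_op ip S.
Proof. by split; [exact: neumann_sum_linear | exists q; exact: neumann_sum_le]. Qed.

Lemma neumann_sum_subB x : S x - B (S x) = x.
Proof.
apply/eqP; rewrite -subr_eq0; apply/eqP.
apply: (@eq0_hnorm_le_expr _ ((1 + r) * q * hn x + hn x)) => N.
apply: le_trans (ler_hnorm_distD hH _ (s N x - B (s N x)) _) _.
rewrite neumann_partial_telescope [x - _ - x]addrAC subrr add0r hnorm_opp //.
have -> : S x - B (S x) - (x - oppow B N x) = (S x - s N x) - B (S x - s N x).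
  by rewrite -neumann_partial_telescope (linear_opB B_lin) !opprD !opprK addrACA.
apply: le_trans (lerD (ler_hnormB hH _ _) (hnorm_oppow_le _ _)) _.
have err := hnorm_neumann_partial_sub_sum N x; rewrite hnorm_subC // in err.
have := le_trans (B_le _) (ler_wpM2l r_ge0 err).
move: (r ^+ N) err => rN err; rewrite -!mulrA; nra.
Qed.

Lemma subB_inj z : z - B z = 0 -> z = 0.
Proof.
move=> /eqP; rewrite subr_eq0 => /eqP zE; apply: (hnorm_eq0 hH).
apply/eqP; rewrite eq_le hnorm_ge0 andbT.
have r1_gt0 : 0 < 1 - r by rewrite subr_gt0.
by rewrite -(pmulr_rle0 _ r1_gt0) mulrBl mul1r subr_le0 {1}zE B_le.
Qed.

Lemma neumann_sum_subBK x : S (x - B x) = x.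
Proof.
apply/eqP; rewrite -subr_eq0; apply/eqP; apply: subB_inj.
by rewrite (linear_opB B_lin) !opprD !opprK addrACA neumann_sum_subB addrACA subrr addNr addr0.
Qed.

Lemma neumann_partial_op_cvg : op_cvg ip s S.
Proof.
apply/cvgr0Pnorm_lt => e e_gt0; near=> N.
have err x : hn (s N x - S x) <= r ^+ N * q * hn x by exact: hnorm_neumann_partial_sub_sum.
rewrite ger0_norm; last exact: opnorm_ge0 err.
apply: le_lt_trans (opnorm_le hH _ err) _; first by rewrite mulr_ge0 ?exprn_ge0.
by near: N; exact: cvgr_lt _ (cvg_expr_scaled q r_ge0 r_lt1) _ e_gt0.
Unshelve. all: by end_near.
Qed.

End NeumannSeries.

Lemma neumann_series (R : realType) (H : lmodType R[i]) (ip : H -> H -> R[i])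
    (B : H -> H) (r : R) :
  is_hilbert ip -> linear_op B -> 0 <= r -> r < 1 ->
  (forall x, hnorm ip (B x) <= r * hnorm ip x) ->
  exists S, [/\ bounded_op ip S, op_cvg ip (neumann_partial B) S,
    forall x, S x - B (S x) = x & forall x, S (x - B x) = x].
Proof.
move=> hH B_lin r_ge0 r_lt1 B_le; exists (neumann_sum hH r_ge0 r_lt1 B_le); split.
- exact: neumann_sum_bounded.
- exact: neumann_partial_op_cvg.
- exact: neumann_sum_subB.
- exact: neumann_sum_subBK.
Qed.

Lemma root_limsup_le (R : realType) (H : lmodType R[i]) (ip : H -> H -> R[i])
    (Cn : nat -> H -> H) (r : R) :
  is_hilbert ip -> 0 <= r -> (forall n x, hnorm ip (Cn n x) <= r ^+ n * hnorm ip x) ->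
  (root_limsup ip Cn <= r%:E)%E.
Proof.
move=> hH r_ge0 Cn_le; rewrite /root_limsup limn_esup_lim.
set f := fun n => _.
rewrite (cvg_lim (@ereal_hausdorff R) (@cvg_esups_inf R f)).
apply: le_trans (@ereal_inf_lbound R _ (esups f 1) _) _; first by exists 1.
apply: ge_ereal_sup => _ [n /= n_gt0 <-]; rewrite /f lee_fin.
have opnormCn_ge0 := opnorm_ge0 hH (Cn_le n).
have opnormCn_le := opnorm_le hH (exprn_ge0 n r_ge0) (Cn_le n).
have n_neq0 : (n%:R : R) != 0 by rewrite pnatr_eq0 -lt0n.
apply: le_trans (ge0_ler_powR _ _ _ opnormCn_le) _.
- by rewrite invr_ge0 ler0n.
- by rewrite nnegrE.
- by rewrite nnegrE exprn_ge0.
by rewrite -powR_mulrn // -powRrM mulfV // powRr1.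
Qed.

Section PositiveContraction.
Variables (R : realType) (H : lmodType R[i]) (ip : H -> H -> R[i]).
Hypothesis hH : is_hilbert ip.
Local Notation hn := (hnorm ip).
Let hip := hilbert_form hH.
Variable A : H -> H.
Hypothesis A_lin : linear_op A.
Hypothesis A_herm : selfadj ip A.
Hypothesis A_ge0 : forall x, 0 <= ip (A x) x.
Hypothesis A_le1 : forall x, ip (A x) x <= ip x x.

Lemma A_hform : pos_hermitian_form (fun x y => ip (A x) y).
Proof.
split=> [a x y z|x y|x] //; first by rewrite A_lin (hform_linl hip).
by rewrite A_herm (hform_conj hip).
Qed.

Lemma ipA_selfE x : ip (A x) x = (Re (ip (A x) x))%:C.
Proof. exact: (hform_selfE A_hform). Qed.

Lemma Re_ipA_ge0 x : 0 <= Re (ip (A x) x).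
Proof. exact: (Re_hform_ge0 A_hform). Qed.

Lemma Re_ipA_le x : Re (ip (A x) x) <= hn x ^+ 2.
Proof.
by have := A_le1 x; rewrite ipA_selfE (hform_selfE hip) lecR sqr_hnorm.
Qed.

Lemma sqr_hnormA_le x : hn (A x) ^+ 2 <= Re (ip (A x) x).
Proof.
have := hform_cauchy_schwarz A_hform x (A x); rewrite /= (hform_selfE hip) -sqr_hnorm //.
rewrite /sqnormc /= expr0n /= addr0 => cs.
have := Re_ipA_le (A x); have := Re_ipA_ge0 x; have := sqr_ge0 (hn (A x)).
move: (hn (A x) ^+ 2) (Re (ip (A x) x)) (Re (ip (A (A x)) (A x))) cs => b a c cs.
nra.
Qed.

Lemma sqr_hnorm_combA p q y : hn (p *: y + q *: A y) ^+ 2 =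
  sqnormc p * (hn y ^+ 2 - Re (ip (A y) y)) + sqnormc (p + q) * Re (ip (A y) y)
  - sqnormc q * (Re (ip (A y) y) - hn (A y) ^+ 2).
Proof.
rewrite !sqr_hnorm // (Re_hformD hip) !(Re_hformZ hip) (hformZl hip) (hformZr hip).
have -> : ip y (A y) = (Re (ip (A y) y))%:C by rewrite (hform_conj hip) ipA_selfE conjc_real.
by rewrite /sqnormc; case: p => p1 p2; case: q => q1 q2; simpc => /=; ring.
Qed.

Lemma hnorm_combA_le p q p' q' k y : 0 <= k ->
  sqnormc p <= k ^+ 2 * sqnormc p' -> sqnormc (p + q) <= k ^+ 2 * sqnormc (p' + q') ->
  k ^+ 2 * sqnormc q' <= sqnormc q ->
  hn (p *: y + q *: A y) <= k * hn (p' *: y + q' *: A y).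
Proof.
move=> k_ge0 hp hpq hq.
rewrite -ler_sqr ?nnegrE ?mulr_ge0 ?hnorm_ge0 // exprMn !sqr_hnorm_combA.
have := Re_ipA_ge0 y; have := Re_ipA_le y; have := sqr_hnormA_le y.
move: (Re (ip (A y) y)) (hn y ^+ 2) (hn (A y) ^+ 2) => a n2 b ba an2 a_ge0.
move: hp hpq hq an2 ba.
rewrite -[_ <= k ^+ 2 * _ p']subr_ge0 -[_ <= k ^+ 2 * _ (p' + q')]subr_ge0.
rewrite -[_ <= sqnormc q]subr_ge0 -[_ <= n2]subr_ge0 -[b <= a]subr_ge0.
move=> hp hpq hq an2 ba.
have := mulr_ge0 hp an2; have := mulr_ge0 hpq a_ge0; have := mulr_ge0 hq ba.
lra.
Qed.

(* For small b > 0, I - b (p I + q A) = (1 - b p) I - b q A is a strict contraction. *)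
Lemma combA_invertible p q : 0 < Re p -> 0 < Re (p + q) ->
  exists T, bounded_op ip T /\ is_inverse (fun x => p *: x + q *: A x) T.
Proof.
move=> p_gt0 pq_gt0.
pose b := Num.min (Re p / sqnormc p) (Re (p + q) / sqnormc (p + q)).
have b_gt0 : 0 < b by rewrite lt_min !divr_gt0 ?sqnormc_gt0.
have bp_lt1 : sqnormc (1 - b%:C * p) < 1.
  by rewrite sqnormc_1_subZ_lt1 // -ler_pdivlMr ?sqnormc_gt0 // ge_min lexx.
have bpq_lt1 : sqnormc (1 - b%:C * (p + q)) < 1.
  by rewrite sqnormc_1_subZ_lt1 // -ler_pdivlMr ?sqnormc_gt0 // ge_min lexx orbT.
pose m := Num.max (sqnormc (1 - b%:C * p)) (sqnormc (1 - b%:C * (p + q))).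
have m_ge0 : 0 <= m by rewrite le_max sqnormc_ge0.
pose B x := (1 - b%:C * p) *: x + (- (b%:C * q)) *: A x.
have B_le x : hn (B x) <= Num.sqrt m * hn x.
  rewrite -{2}[x]scale1r -[1 *: x]addr0 -(scale0r (A x)).
  apply: hnorm_combA_le; rewrite ?sqrtr_ge0 // sqr_sqrtr // ?addr0 ?sqnormc0 ?sqnormc1.
  - by rewrite mulr1 le_max lexx.
  - by rewrite mulr1 -addrA -opprD -mulrDr le_max lexx orbT.
  - by rewrite mulr0 sqnormc_ge0.
have sqrtm_lt1 : Num.sqrt m < 1 by rewrite -sqrtr1 ltr_sqrt // gt_max bp_lt1.
have [S [[S_lin [M S_le]] _ S_subB S_subBK]] :=
  neumann_series hH (linear_op_comb A_lin _ _) (sqrtr_ge0 m) sqrtm_lt1 B_le.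
have subB x : x - B x = b%:C *: (p *: x + q *: A x).
  by rewrite /B scalerBl scale1r scaleNr opprD opprB opprK !scalerDr !scalerA addrA subrKC.
have bC_neq0 : b%:C != 0 by rewrite eq_complex /= negb_and gt_eqF.
exists (fun y => S (b%:C *: y)); split; last first.
  by split=> [y|x] /=; [apply: (scalerI bC_neq0); rewrite -subB S_subB | rewrite -subB].
split=> [a x y|] /=; first by rewrite scalerDr !scalerA mulrC -scalerA S_lin.
exists (M * normc b%:C) => x; apply: le_trans (S_le _) _.
by rewrite hnormZ // mulrA.
Qed.

Lemma sqrtc_shift_invertible sigma : 0 < Re sigma ->
  exists Linv, bounded_op ip Linv /\
    is_inverse (fun x => x + (sigma - 1) *: A x + sqrtc sigma *: x) Linv.
Proof.
move=> sigma_gt0; set c := sqrtc sigma; have c_gt0 := Re_sqrtc_gt0 sigma_gt0.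
have p_gt0 : 0 < Re (1 + c) by rewrite raddfD /= addr_gt0.
have pq_gt0 : 0 < Re (1 + c + (sigma - 1)).
  have -> : 1 + c + (sigma - 1) = sigma + c by ring.
  by rewrite raddfD addr_gt0.
have [Linv [Linv_bd [Lp_Linv Linv_Lp]]] := combA_invertible p_gt0 pq_gt0.
have LpE x : x + (sigma - 1) *: A x + c *: x = (1 + c) *: x + (sigma - 1) *: A x.
  by rewrite scalerDl scale1r addrAC.
by exists Linv; split; last by split=> x; rewrite LpE.
Qed.

Lemma hnorm_cayley_le sigma y : 0 < Re sigma ->
  hn (y + (sigma - 1) *: A y - sqrtc sigma *: y) <=
  normc ((sqrtc sigma - 1) / (sqrtc sigma + 1)) *
  hn (y + (sigma - 1) *: A y + sqrtc sigma *: y).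
Proof.
move=> sigma_gt0; set c := sqrtc sigma; set u := (c - 1) / (c + 1).
have c_gt0 : 0 < Re c := Re_sqrtc_gt0 sigma_gt0.
have c1_neq0 : c + 1 != 0.
  by apply/eqP => c10; have := c_gt0; rewrite -[c](addrK 1) c10 sub0r /=; lra.
have u_le1 : sqnormc u <= 1.
  by rewrite -sqrnormc expr_le1 ?normc_ge0 // ltW // cayley_normc_lt1.
rewrite -[sigma]sqr_sqrtc -/c addrAC -[X in X - _]scale1r -scalerBl.
rewrite [y + _ + _]addrAC -[X in X + c *: y]scale1r -scalerDl.
(* 1 - c = - u (1 + c) and c^2 - c = u (c^2 + c) *)
apply: hnorm_combA_le; rewrite ?normc_ge0 // sqrnormc -sqnormcM.
- by rewrite -sqnormcN /u le_eqVlt; apply/orP; left; apply/eqP; congr sqnormc; field.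
- by rewrite /u le_eqVlt; apply/orP; left; apply/eqP; congr sqnormc; field.
- by rewrite sqnormcM ler_piMl ?sqnormc_ge0.
Qed.

End PositiveContraction.

Section Reflection.
Variables (R : realType) (H : lmodType R[i]) (ip : H -> H -> R[i]).
Hypothesis hH : is_hilbert ip.
Local Notation hn := (hnorm ip).
Let hip := hilbert_form hH.
Variable G : H -> H.
Hypothesis G_proj : orth_projection ip G.
Local Notation U := (fun x => x - 2%:R *: G x).

Let G_lin : linear_op G. Proof. by case: G_proj => -[]. Qed.
Let G_idem : forall x, G (G x) = G x. Proof. by case: G_proj => _ []. Qed.
Let G_selfadj : selfadj ip G. Proof. by case: G_proj => _ []. Qed.

Lemma reflection_linear : linear_op U.
Proof.
by move=> a x y; have := linear_op_comb G_lin 1 (- 2%:R) a x y; rewrite !scale1r !scaleNr.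
Qed.

Lemma reflectionK x : U (U x) = x.
Proof.
rewrite /= (linear_opB G_lin) (linear_opZ G_lin) G_idem.
have -> : G x - 2%:R *: G x = - G x by rewrite scaler_nat mulr2n opprD addrA subrr sub0r.
by rewrite scalerN opprK subrK.
Qed.

Lemma hnorm_reflection x : hn (U x) = hn x.
Proof.
apply/eqP; rewrite /= -(eqrXn2 (ltn0Sn 1)) ?hnorm_ge0 // !sqr_hnorm // -scaleNr.
rewrite (Re_hformD hip) (Re_hformZ hip) (hformZr hip).
have -> : ip x (G x) = ip (G x) (G x) by rewrite G_selfadj G_idem.
rewrite [ip (G x) (G x)](hform_selfE hip) /sqnormc /=; simpc => /=.
by apply/eqP; ring.
Qed.

Lemma shifted_projection_inverse (Lp Lm Linv S : H -> H) (c : R[i]) :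
  linear_op Lm -> linear_op Linv -> linear_op S ->
  is_inverse Lp Linv -> (forall x, Lm x = Lp x - 2%:R *: (c *: x)) ->
  (forall x, S x - U (Lm (Linv (S x))) = x) ->
  (forall x, S (x - U (Lm (Linv x))) = x) ->
  is_inverse (fun x => - (c *: x) + G (Lp x)) (fun x => (- 2%:R) *: Linv (S (U x))).
Proof.
move=> Lm_lin Linv_lin S_lin Lp_inv LmE S_subT S_subTK.
have Lp_lin := linear_op_inverse Linv_lin Lp_inv; case: Lp_inv => Lp_Linv Linv_Lp.
(* that is, - c I + G Lp = - 1/2 U (I - U Lm Linv) Lp *)
have key w : U (Lp w - U (Lm w)) = (- 2%:R) *: (- (c *: w) + G (Lp w)).
  rewrite (linear_opB reflection_linear) reflectionK LmE.
  by rewrite opprB addrC addrA subrK scaleNr scalerDr scalerN opprD opprK.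
have m2_neq0 : (- 2%:R : R[i]) != 0 by rewrite oppr_eq0 pnatr_eq0.
split=> [x|w] /=.
  apply: (scalerI m2_neq0); rewrite -key (linear_opZ Lp_lin) Lp_Linv.
  rewrite (linear_opZ Lm_lin) !(linear_opZ reflection_linear) -scalerBr S_subT.
  by rewrite (linear_opZ reflection_linear) reflectionK.
rewrite -(linear_opZ Linv_lin) -(linear_opZ S_lin) -(linear_opZ reflection_linear).
rewrite -key reflectionK.
by have := S_subTK (Lp w); rewrite Linv_Lp => ->.
Qed.

Lemma shifted_projection_neumann (Lp Lm Linv : H -> H) (c : R[i]) (k : R) :
  linear_op Lm -> linear_op Linv -> is_inverse Lp Linv ->
  (forall x, Lm x = Lp x - 2%:R *: (c *: x)) ->
  0 <= k -> k < 1 -> (forall x, hn (Lm (Linv x)) <= k * hn x) ->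
  let T := fun x => U (Lm (Linv x)) in
  opnorm ip T <= k /\
  exists S, bounded_op ip S /\ op_cvg ip (neumann_partial T) S /\
    is_inverse (fun x => - (c *: x) + G (Lp x)) (fun x => (- 2%:R) *: Linv (S (U x))) /\
    (root_limsup ip (oppow T) <= k%:E)%E.
Proof.
move=> Lm_lin Linv_lin Lp_inv LmE k_ge0 k_lt1 LmLinv_le T.
have T_le x : hn (T x) <= k * hn x by rewrite /T hnorm_reflection.
have T_lin : linear_op T.
  exact: linear_op_comp (linear_op_comp Linv_lin Lm_lin) reflection_linear.
have [S [S_bd S_cvg S_subT S_subTK]] := neumann_series hH T_lin k_ge0 k_lt1 T_le.
have [S_lin _] := S_bd.
split; first exact (opnorm_le hH k_ge0 T_le).
exists S; split => //; split => //; split.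
  exact (shifted_projection_inverse Lm_lin Linv_lin S_lin Lp_inv LmE S_subT S_subTK).
exact (root_limsup_le hH k_ge0 (hnorm_oppow_le k_ge0 T_le)).
Qed.

End Reflection.

Theorem mainTheorem7 (R : realType) (H : lmodType R[i]) (ip : H -> H -> R[i])
  (hH : is_hilbert ip)
  (A : H -> H) (hA_bd : bounded_op ip A) (hA_herm : selfadj ip A)
  (hA_pos : forall x : H, 0 <= ip (A x) x) (hA_leI : forall x : H, ip (A x) x <= ip x x)
  (Gamma : H -> H) (hGamma : orth_projection ip Gamma)
  (sigma : R[i]) (hsigma : 0 < complex.Re sigma) :
  let c : R[i] := sqrtc sigma in
  let L : H -> H := fun x => x + (sigma - 1) *: A x in
  let u : R[i] := (c - 1) / (c + 1) in
  let Lp : H -> H := fun x => L x + c *: x in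
  let Lm : H -> H := fun x => L x - c *: x in
  let Ups : H -> H := fun x => x - 2%:R *: Gamma x in
  let M : H -> H := fun x => - (c *: x) + Gamma (Lp x) in
  (exists Linv : H -> H, bounded_op ip Linv /\ is_inverse Lp Linv) /\
  Normc.normc u < 1 /\
  forall Linv : H -> H, bounded_op ip Linv -> is_inverse Lp Linv ->
    let K : H -> H := fun x => Lm (Linv x) in
    let T : H -> H := fun x => Ups (K x) in
    opnorm ip K <= Normc.normc u /\
    opnorm ip T <= Normc.normc u /\
    exists S : H -> H,
      bounded_op ip S /\
      op_cvg ip (neumann_partial T) S /\
      is_inverse M (fun x => (- 2%:R) *: Linv (S (Ups x))) /\
      (root_limsup ip (oppow T) <= (Normc.normc u)%:E)%E.
Proof.
move=> c L u Lp Lm Ups M; have [A_lin _] := hA_bd.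
have u_lt1 : Normc.normc u < 1 := cayley_normc_lt1 (Re_sqrtc_gt0 hsigma).
split; first exact (sqrtc_shift_invertible hH A_lin hA_herm hA_pos hA_leI hsigma).
split=> // Linv [Linv_lin _] Linv_inv K T; have [Lp_Linv _] := Linv_inv.
have K_le x : hnorm ip (K x) <= Normc.normc u * hnorm ip x.
  have := hnorm_cayley_le hH A_lin hA_herm hA_pos hA_leI (Linv x) hsigma.
  by rewrite -/(Lp (Linv x)) Lp_Linv.
have LmE x : Lm x = (1 - c) *: x + (sigma - 1) *: A x.
  by rewrite /Lm /L [(1 - c) *: x]scalerBl scale1r addrAC.
have Lm_lin : linear_op Lm by move=> a x y; rewrite !LmE linear_op_comb.
have LmLpE x : Lm x = Lp x - 2%:R *: (c *: x).
  by rewrite /Lm /Lp scaler_nat mulr2n opprD addrA addrK.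
split; first exact (opnorm_le hH (normc_ge0 u) K_le).
exact (shifted_projection_neumann hH hGamma Lm_lin Linv_lin Linv_inv LmLpE
  (normc_ge0 u) u_lt1 K_le).
Qed.
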